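(* Let $X$ be a finite set and $(\mathcal{T}_X,\leq)$ the ordered full transformation semigroup with the natural partial order. For $f,g\in\mathcal{T}_X$ let $B(f)=(f\cup f\mathcal{T}_Xf]$ and $B(g)=(g\cup g\mathcal{T}_Xg]$ be the principal bi-ideals they generate. Then $f\,\mathscr{L}_{\mathcal{T}_X}\,g$ if and only if $B(f)\,\mathscr{L}_{\mathcal{B}(\mathcal{T}_X)}\,B(g)$, where for bi-ideals $B_1,B_2$ of $(\mathcal{T}_X,\leq)$ we define $B_1\,\mathscr{L}_{\mathcal{B}(\mathcal{T}_X)}\,B_2$ to mean: for each $b_1\in B_1$ there exists $b_2\in B_2$ with $b_1\,\mathscr{L}_{\mathcal{T}_X}\,b_2$, and for each $b_2'\in B_2$ there exists $b_1'\in B_1$ with $b_1'\,\mathscr{L}_{\mathcal{T}_X}\,b_2'$.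
   Context: $\mathcal{T}_X$ is the semigroup of all maps $X\to X$, maps written on the right and composed left to right. Natural partial order: $f\leq g$ iff $f\mathcal{T}_X^1\subseteq g\mathcal{T}_X^1$ and $f=\alpha f=\alpha g$ for some $\alpha\in\mathcal{T}_X$; $(\mathcal{T}_X,\leq)$ is then a regular ordered semigroup. For $A\subseteq\mathcal{T}_X$, $(A]=\{h: h\leq a\text{ for some }a\in A\}$. A bi-ideal is a nonempty $A$ with $A\mathcal{T}_XA\subseteq A$ and $(A]=A$. $\mathscr{L}_{\mathcal{T}_X}$ is the Green's $\mathscr{L}$-relation of the ordered semigroup $(\mathcal{T}_X,\leq)$: $f\,\mathscr{L}_{\mathcal{T}_X}\,g$ iff $(f\cup\mathcal{T}_Xf]=(g\cup\mathcal{T}_Xg]$ (equivalently, $\operatorname{Im}f=\operatorname{Im}g$). *)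

From mathcomp Require Import all_boot.
Set Implicit Arguments. Unset Strict Implicit. Unset Printing Implicit Defensive.

Definition trans (T : finType) := T -> T.

(* Maps written on the right, composed left to right: x (f g) = (x f) g. *)
Definition tmul (T : finType) (f g : trans T) : trans T := fun x => g (f x).

Definition tset (T : finType) := trans T -> Prop.

Definition rideal1 (T : finType) (f : trans T) : tset T :=
  fun h => h = f \/ exists k, h = tmul f k.

Definition tle (T : finType) (f g : trans T) : Prop :=
  (forall h, rideal1 f h -> rideal1 g h) /\
  exists a : trans T, f = tmul a f /\ f = tmul a g.

Definition down (T : finType) (A : tset T) : tset T :=
  fun h => exists a, A a /\ tle h a.

Definition lideal_gen (T : finType) (f : trans T) : tset T :=
  down (fun h => h = f \/ exists k, h = tmul k f).

Definition Lrel (T : finType) (f g : trans T) : Prop :=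
  forall h, lideal_gen f h <-> lideal_gen g h.

Definition Bgen (T : finType) (f : trans T) : tset T :=
  down (fun h => h = f \/ exists k, h = tmul (tmul f k) f).

Definition LBrel (T : finType) (B1 B2 : tset T) : Prop :=
  (forall b1, B1 b1 -> exists b2, B2 b2 /\ Lrel b1 b2) /\
  (forall b2, B2 b2 -> exists b1, B1 b1 /\ Lrel b1 b2).

From Stdlib Require Import FunctionalExtensionality.
From mathcomp Require Import all_boot.

(* Both relations only see images.  An element below [a] in the natural order
   has image inside [im a], so [f L g] iff [im f = im g], and every element of
   [B(f)] has image inside [im f].  Conversely, whenever [im h] is contained in
   [im g], a sandwich [g k g] of [B(g)] has image exactly [im h]: let [k] send
   [g x] to a [g]-preimage of a point of [im h], fixing [im h] pointwise.  So
   [B(f) L B(g)] compares the families of images below [im f] and [im g], which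
   coincide iff [im f = im g]. *)

Set Implicit Arguments.
Unset Strict Implicit.
Unset Printing Implicit Defensive.

Section Transformations.

Variable T : finType.
Implicit Types f g h a k : trans T.

Lemma tle_refl h : tle h h.
Proof. by split=> //; exists id. Qed.

Lemma codom_tle h a : tle h a -> {subset codom h <= codom a}.
Proof. by move=> [_ [c [_ ->]]] _ /codomP [x ->]; apply: codom_f. Qed.

Lemma codom_tmul k f : {subset codom (tmul k f) <= codom f}.
Proof. by move=> _ /codomP [x ->]; apply: codom_f. Qed.

Definition tsect g y := odflt y [pick x | g x == y].

Lemma tsectK g y : y \in codom g -> g (tsect g y) = y.
Proof.
rewrite /tsect; case: pickP => [x /eqP // | none] /codomP [x Ex].
by move: (none x); rewrite Ex eqxx.
Qed.

Lemma lideal_genP f h : lideal_gen f h <-> {subset codom h <= codom f}.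
Proof.
split.
  move=> [a [[-> | [k ->]] le_ha]] y /(codom_tle le_ha) //.
  exact: codom_tmul.
move=> sub_hf; exists h; split; last exact: tle_refl.
right; exists (fun x => tsect f (h x)).
by apply: functional_extensionality => x; rewrite /tmul tsectK ?sub_hf ?codom_f.
Qed.

Lemma LrelP f g : Lrel f g <-> codom f =i codom g.
Proof.
split=> [L_fg y | eq_fg h].
  have /lideal_genP sub_fg : lideal_gen g f by apply/L_fg/lideal_genP.
  have /lideal_genP sub_gf : lideal_gen f g by apply/L_fg/lideal_genP.
  by apply/idP/idP=> [/sub_fg | /sub_gf].
by split=> /lideal_genP sub; apply/lideal_genP => y /sub; rewrite eq_fg.
Qed.

Lemma Lrel_sym f g : Lrel f g -> Lrel g f.
Proof. by move=> L_fg h; apply: iff_sym. Qed.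

Lemma Bgen_self g : Bgen g g.
Proof. by exists g; split; [left | apply: tle_refl]. Qed.

Lemma Bgen_sandwich g k : Bgen g (tmul (tmul g k) g).
Proof. by exists (tmul (tmul g k) g); split; [right; exists k | apply: tle_refl]. Qed.

Lemma codom_Bgen g b : Bgen g b -> {subset codom b <= codom g}.
Proof. by move=> [a [[-> | [k ->]] le_ba]] y /(codom_tle le_ba) // /codom_tmul. Qed.

Lemma codom_sandwich g h :
  {subset codom h <= codom g} -> exists k, codom (tmul (tmul g k) g) =i codom h.
Proof.
move=> sub_hg.
have [x0 _ | T0] := pickP (fun _ : T => true); last first.
  by exists id => y; move: (T0 y).
pose r y := if y \in codom h then y else h x0.
have r_codom y : r y \in codom h by rewrite /r; case: ifP => // _; apply: codom_f.
exists (fun y => tsect g (r y)) => y; rewrite /tmul; apply/codomP/idP.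
  by move=> [x ->]; rewrite tsectK ?sub_hg ?r_codom.
move=> hy; have /codomP [w Ew] := sub_hg y hy.
by exists w; rewrite tsectK ?sub_hg ?r_codom // /r -Ew hy.
Qed.

Lemma Bgen_Lrel_transfer f g b :
  {subset codom f <= codom g} -> Bgen f b -> exists2 b', Bgen g b' & Lrel b b'.
Proof.
move=> sub_fg /codom_Bgen sub_bf.
have [k eq_kb] : exists k, codom (tmul (tmul g k) g) =i codom b.
  by apply: codom_sandwich => y /sub_bf /sub_fg.
by exists (tmul (tmul g k) g); [apply: Bgen_sandwich | apply/LrelP => y; rewrite eq_kb].
Qed.

End Transformations.

Theorem mainTheorem10 (T : finType) (f g : trans T) :
  Lrel f g <-> LBrel (Bgen f) (Bgen g).
Proof.
split=> [/LrelP eq_fg | [LB_fg LB_gf]].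
  have sub_fg : {subset codom f <= codom g} by move=> y; rewrite eq_fg.
  have sub_gf : {subset codom g <= codom f} by move=> y; rewrite eq_fg.
  split=> b Bb.
    by have [b' Bb' L_bb'] := Bgen_Lrel_transfer sub_fg Bb; exists b'.
  have [b' Bb' L_bb'] := Bgen_Lrel_transfer sub_gf Bb.
  by exists b'; split=> //; apply: Lrel_sym.
have [b2 [Bb2 /LrelP eq_fb2]] := LB_fg f (Bgen_self f).
have [b1 [Bb1 /LrelP eq_b1g]] := LB_gf g (Bgen_self g).
apply/LrelP => y; apply/idP/idP.
  by rewrite eq_fb2 => /(codom_Bgen Bb2).
by rewrite -eq_b1g => /(codom_Bgen Bb1).
Qed.
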